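(* In the setting below, assume moreover $\alpha_3\neq0$. The map $(\rho,t)\mapsto(t,g(\rho,t))$ (projection of the multivalued solution $N$ to the $(t,x)$-plane) is singular exactly at the points where $\partial g/\partial\rho=0$, and these are precisely the points with $$t=\frac{\pm A(\rho)(\rho+\alpha_3)^2-\alpha_1\alpha_3+\alpha_0}{\alpha_3\alpha_2}.$$ At such a point (with the same choice of sign), $$x=g(\rho,t)=-\frac{G(\rho)}{\alpha_2}+\frac{\rho(\rho+2\alpha_3)(\rho+\alpha_3)^2A(\rho)^2-\alpha_3^2\alpha_1^2+\alpha_0^2\pm2\alpha_0(\rho+\alpha_3)^2A(\rho)}{2\alpha_3^2\alpha_2}.$$ Thus the caustic is the union of the two curves parametrized by $\rho$ given by these formulas.
   Context: Setting: $p\colon(0,\infty)\to\mathbb{R}$ smooth with $p'>0$, $A(\rho)=\rho^{-1}\sqrt{p'(\rho)}$; constants $\alpha_0,\alpha_1,\alpha_2,\alpha_3$ with $\alpha_2\neq0$; $G$ an antiderivative of $A(\rho)^2(\rho+\alpha_3)$ on an interval $I\subset(0,\infty)$ not containing $-\alpha_3$; $$g(\rho,t)=-\frac{G(\rho)}{\alpha_2}+\frac{\alpha_2^2t^2\rho(\rho+2\alpha_3)+2t\alpha_2\bigl(\alpha_3(\alpha_0+2\alpha_1\rho)+\alpha_1\rho^2\bigr)-(\alpha_0-\alpha_1\alpha_3)^2}{2\alpha_2(\rho+\alpha_3)^2},$$ $U(\rho,t)=\frac{\alpha_2\rho t+\alpha_1\rho+\alpha_0}{\rho+\alpha_3}$.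 The surface $N=\{(t,g(\rho,t),U(\rho,t),\rho)\}$ in the space with coordinates $(t,x,u,\rho)$ is a multivalued solution of the one-dimensional Euler system $\rho_t+(\rho u)_x=0$, $u_t+uu_x+\frac{p'(\rho)}{\rho}\rho_x=0$. The caustic is the set of points where the projection of $N$ to the $(t,x)$-plane is singular. *)

From Stdlib Require Import Reals Lra.
From Coquelicot Require Import Coquelicot.
Open Scope R_scope.

Definition Afun (p : R -> R) (rho : R) : R := / rho * sqrt (Derive p rho).

Definition gfun (G : R -> R) (a0 a1 a2 a3 : R) (rho t : R) : R :=
  - G rho / a2
  + (a2 ^ 2 * t ^ 2 * rho * (rho + 2 * a3)
     + 2 * t * a2 * (a3 * (a0 + 2 * a1 * rho) + a1 * rho ^ 2)
     - (a0 - a1 * a3) ^ 2)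
    / (2 * a2 * (rho + a3) ^ 2).

Definition Ufun (a0 a1 a2 a3 : R) (rho t : R) : R :=
  (a2 * rho * t + a1 * rho + a0) / (rho + a3).

Definition singular_at (F1 F2 : R -> R -> R) (rho t : R) : Prop :=
  Derive (fun r => F1 r t) rho * Derive (fun s => F2 rho s) t
  - Derive (fun s => F1 rho s) t * Derive (fun r => F2 r t) rho = 0.

Definition is_open_interval (I : R -> Prop) : Prop :=
  (forall x y z, I x -> I z -> x <= y <= z -> I y) /\
  (forall r, I r -> exists eps, 0 < eps /\ forall s, Rabs (s - r) < eps -> I s).

(* The projection of N to the (t,x)-plane is the map (rho,t) |-> (t, g(rho,t)),
   a "graph-type" map whose Jacobian determinant is -dg/drho; so it is singular
   exactly where dg/drho = 0 (lemma [graph_map_singular_iff]).  Differentiating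
   g with G' = A^2 (rho + a3) gives (lemma [gfun_is_derive_rho])
       dg/drho = (L^2 - (A (rho+a3)^2)^2) / (a2 (rho+a3)^3),
   with L = a3 a2 t + a1 a3 - a0 affine in t.  Hence dg/drho = 0 iff
   L = ± A (rho+a3)^2 ([sq_eq_sq_sign]), i.e. iff t lies on one of the two
   branches t = (± A (rho+a3)^2 - a1 a3 + a0)/(a3 a2) ([gfun_crit_iff]). *)
From Stdlib Require Import Reals Lra.
From Coquelicot Require Import Coquelicot.
Open Scope R_scope.

Lemma graph_map_singular_iff (F : R -> R -> R) (rho t : R) :
  singular_at (fun _ s => s) F rho t <-> Derive (fun r => F r t) rho = 0.
Proof.
  unfold singular_at; rewrite Derive_const, Derive_id.
  split; intro H; lra.
Qed.

Lemma sq_eq_sq_sign (x c : R) :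
  x ^ 2 = c ^ 2 <-> exists sg : R, (sg = 1 \/ sg = -1) /\ x = sg * c.
Proof.
  split.
  - intro Hsq.
    assert (Hfac : (x - c) * (x + c) = 0) by nra.
    destruct (Rmult_integral _ _ Hfac) as [H | H].
    + exists 1; split; [left; reflexivity | lra].
    + exists (-1); split; [right; reflexivity | lra].
  - intros [sg [[-> | ->] ->]]; ring.
Qed.

Section Caustic.

Variables (G : R -> R) (a0 a1 a2 a3 : R).
Hypothesis ha2 : a2 <> 0.
Hypothesis ha3 : a3 <> 0.

(* The affine function of t whose square governs dg/drho. *)
Definition crit_lin (t : R) : R := a3 * a2 * t + a1 * a3 - a0.

Lemma gfun_is_derive_rho (rho t d : R) :
  rho + a3 <> 0 -> is_derive G rho d ->
  is_derive (fun r => gfun G a0 a1 a2 a3 r t) rho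
    ((crit_lin t ^ 2 - d * (rho + a3) ^ 3) / (a2 * (rho + a3) ^ 3)).
Proof.
  intros hs hd; unfold gfun, crit_lin.
  assert (HG : Derive G rho = d) by exact (is_derive_unique _ _ _ hd).
  auto_derive.
  - repeat split; auto.
    + exists d; exact hd.
    + rewrite !Rmult_1_r; repeat apply Rmult_integral_contrapositive_currified; lra.
  - replace (Derive (fun x => G x) rho) with d by (symmetry; exact HG).
    field; auto.
Qed.

Lemma gfun_crit_iff (A rho t : R) :
  rho + a3 <> 0 -> is_derive G rho (A ^ 2 * (rho + a3)) ->
  Derive (fun r => gfun G a0 a1 a2 a3 r t) rho = 0
  <-> exists sg : R, (sg = 1 \/ sg = -1) /\
        t = (sg * A * (rho + a3) ^ 2 - a1 * a3 + a0) / (a3 * a2).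
Proof.
  intros hs hd.
  assert (HD : Derive (fun r => gfun G a0 a1 a2 a3 r t) rho =
    (crit_lin t ^ 2 - A ^ 2 * (rho + a3) * (rho + a3) ^ 3) / (a2 * (rho + a3) ^ 3))
    by exact (is_derive_unique _ _ _ (gfun_is_derive_rho _ t _ hs hd)).
  rewrite HD.
  assert (hden : a2 * (rho + a3) ^ 3 <> 0)
    by (apply Rmult_integral_contrapositive_currified; auto; apply pow_nonzero; auto).
  assert (Hnum : (crit_lin t ^ 2 - A ^ 2 * (rho + a3) * (rho + a3) ^ 3)
                   / (a2 * (rho + a3) ^ 3) = 0
                 <-> crit_lin t ^ 2 = (A * (rho + a3) ^ 2) ^ 2).
  { split; intro H.
    - apply Rmult_integral in H as [H | H].
      + nra.
      + exfalso; exact (Rinv_neq_0_compat _ hden H).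
    - unfold Rdiv; replace (crit_lin t ^ 2 - A ^ 2 * (rho + a3) * (rho + a3) ^ 3)
        with (crit_lin t ^ 2 - (A * (rho + a3) ^ 2) ^ 2) by ring.
      rewrite H; ring. }
  rewrite Hnum, sq_eq_sq_sign; unfold crit_lin.
  split; intros [sg [hsg Ht]]; exists sg; split; auto.
  - apply (Rmult_eq_reg_l (a3 * a2)); [| apply Rmult_integral_contrapositive_currified; auto].
    field_simplify; [lra | auto].
  - rewrite Ht; field; auto.
Qed.

Lemma gfun_on_branch (A rho sg : R) :
  rho + a3 <> 0 -> (sg = 1 \/ sg = -1) ->
  gfun G a0 a1 a2 a3 rho ((sg * A * (rho + a3) ^ 2 - a1 * a3 + a0) / (a3 * a2)) =
    - G rho / a2
    + (rho * (rho + 2 * a3) * (rho + a3) ^ 2 * A ^ 2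
       - a3 ^ 2 * a1 ^ 2 + a0 ^ 2
       + sg * 2 * a0 * (rho + a3) ^ 2 * A)
      / (2 * a3 ^ 2 * a2).
Proof.
  intros hs [-> | ->]; unfold gfun; field; auto.
Qed.

End Caustic.

Theorem mainTheorem4
  (p : R -> R) (a0 a1 a2 a3 : R) (I : R -> Prop) (G : R -> R)
  (p_smooth : forall n r, 0 < r -> ex_derive_n p n r)
  (p_incr : forall r, 0 < r -> 0 < Derive p r)
  (ha2 : a2 <> 0) (ha3 : a3 <> 0)
  (hI : is_open_interval I)
  (hIpos : forall r, I r -> 0 < r)
  (hIa3 : forall r, I r -> r <> - a3)
  (hG : forall r, I r -> is_derive G r ((Afun p r) ^ 2 * (r + a3))) :
  forall rho t, I rho ->
    (singular_at (fun r s => s) (gfun G a0 a1 a2 a3) rho t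
       <-> Derive (fun r => gfun G a0 a1 a2 a3 r t) rho = 0) /\
    (Derive (fun r => gfun G a0 a1 a2 a3 r t) rho = 0
       <-> exists sg : R, (sg = 1 \/ sg = -1) /\
           t = (sg * Afun p rho * (rho + a3) ^ 2 - a1 * a3 + a0) / (a3 * a2)) /\
    (forall sg : R, (sg = 1 \/ sg = -1) ->
       t = (sg * Afun p rho * (rho + a3) ^ 2 - a1 * a3 + a0) / (a3 * a2) ->
       gfun G a0 a1 a2 a3 rho t =
         - G rho / a2
         + (rho * (rho + 2 * a3) * (rho + a3) ^ 2 * (Afun p rho) ^ 2
            - a3 ^ 2 * a1 ^ 2 + a0 ^ 2
            + sg * 2 * a0 * (rho + a3) ^ 2 * Afun p rho)
           / (2 * a3 ^ 2 * a2)).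
Proof.
  intros rho t hrho.
  assert (hs : rho + a3 <> 0) by (intro H; apply (hIa3 _ hrho); lra).
  split; [| split].
  - apply graph_map_singular_iff.
  - exact (gfun_crit_iff G a0 a1 a2 a3 ha2 ha3 _ _ t hs (hG _ hrho)).
  - intros sg hsg ->; exact (gfun_on_branch G a0 a1 a2 a3 ha2 ha3 _ _ _ hs hsg).
Qed.
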